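(* Let $(I,\mathcal A,\mu)$ be a charge space and $M$ an $\mathcal A$-meanable $L$-structure. Then for every affine $L$-formula $\phi(x_1,\dots,x_n)$ and all $[a^1_i],\dots,[a^n_i]\in M^\mu$, $$\phi^{M^{\mu}}([a^1_i],\dots,[a^n_i])=\int\phi^M(a^1_i,\dots,a^n_i)\,d\mu .$$
   Context: Affine continuous logic: $L$ a Lipschitz language; $L$-structures are complete metric spaces of diameter $\le1$ with Lipschitz interpretations; affine formulas are built from atomic $1,d(t_1,t_2),R(\bar t)$ by $+$, real scalars, $\sup$, $\inf$. A charge space $(I,\mathcal A,\mu)$: $\mathcal A$ is a Boolean algebra of subsets of $I$ and $\mu:\mathcal A\to[0,1]$ is finitely additive with $\mu(I)=1$; integrals of bounded $\mathcal A$-measurable real functions are with respect to $\mu$. The weight $w(M)$ is the least cardinality of a base of the topology of $M$, plus $\aleph_0$. $M$ is $\mathcal A$-meanable if $M$ is finite or $\mathcal A$ is closed under intersections of at most $w(M)$ many members. A map $a:I\to M$ is measurable if $a^{-1}(B)\in\mathcal A$ for every Borel $B\subseteq M$. $M^\mu$ is the set of classes $[a_i]$ of measurable maps $a=(a_i):I\to M$ modulo $\int d(a_i,b_i)d\mu=0$, with metric $d([a_i],[b_i])=\int d(a_i,b_i)d\mu$, $c^{M^\mu}=[c^M]$, $F^{M^\mu}([a_i],\dots)=[F^M(a_i,\dots)]$, $R^{M^\mu}([a_i],\dots)=\int R^M(a_i,\dots)d\mu$. *)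

From Stdlib Require Import Reals List ClassicalEpsilon.
Open Scope R_scope.

Fixpoint rsum (n : nat) (f : nat -> R) : R :=
  match n with O => 0 | S m => rsum m f + f m end.

(* supremum of a set of reals (0 if empty or unbounded) *)
Definition Rsup (E : R -> Prop) : R :=
  match excluded_middle_informative (bound E /\ exists x, E x) with
  | left H => proj1_sig (completeness E (proj1 H) (proj2 H))
  | right _ => 0
  end.

Definition Rinf (E : R -> Prop) : R := - Rsup (fun y => E (- y)).

Record Lang := {
  Fsym : Type;  Fari : Fsym -> nat;  Flip : Fsym -> R;
  Rsym : Type;  Rari : Rsym -> nat;  Rlip : Rsym -> R
}.

(* Data of a (pre)structure.  An n-ary symbol is interpreted on argument
   lists [nat -> car]; only the first n arguments matter (this follows from
   the Lipschitz condition below). *)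
Record Str (L : Lang) := {
  car  : Type;
  dist : car -> car -> R;
  fint : forall f : Fsym L, (nat -> car) -> car;
  rint : forall r : Rsym L, (nat -> car) -> R
}.
Arguments car {L}. Arguments dist {L}. Arguments fint {L}. Arguments rint {L}.

Definition is_structure (L : Lang) (M : Str L) : Prop :=
  (forall x, dist M x x = 0) /\
  (forall x y, dist M x y = 0 -> x = y) /\
  (forall x y, dist M x y = dist M y x) /\
  (forall x y z, dist M x z <= dist M x y + dist M y z) /\
  (forall x y, dist M x y <= 1) /\
  (forall u : nat -> car M,
      (forall eps, eps > 0 -> exists N, forall m n, (N <= m)%nat -> (N <= n)%nat ->
                   dist M (u m) (u n) < eps) ->
      exists x, forall eps, eps > 0 -> exists N, forall n, (N <= n)%nat ->
                   dist M (u n) x < eps) /\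
  (forall f x y, dist M (fint M f x) (fint M f y)
                 <= Flip L f * rsum (Fari L f) (fun k => dist M (x k) (y k))) /\
  (forall r x y, Rabs (rint M r x - rint M r y)
                 <= Rlip L r * rsum (Rari L r) (fun k => dist M (x k) (y k))).

Inductive term (L : Lang) : Type :=
| tvar : nat -> term L
| tapp : forall f : Fsym L, (nat -> term L) -> term L.

Inductive formula (L : Lang) : Type :=
| fone : formula L
| fdist : term L -> term L -> formula L
| frel : forall r : Rsym L, (nat -> term L) -> formula L
| fplus : formula L -> formula L -> formula L
| fscale : R -> formula L -> formula L
| fsup : nat -> formula L -> formula L
| finf : nat -> formula L -> formula L.

Arguments tvar {L}. Arguments tapp {L}.
Arguments fone {L}. Arguments fdist {L}. Arguments frel {L}. Arguments fplus {L}.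
Arguments fscale {L}. Arguments fsup {L}. Arguments finf {L}.

Definition upd {X : Type} (e : nat -> X) (x : nat) (a : X) : nat -> X :=
  fun k => if Nat.eqb k x then a else e k.

Fixpoint eval_term {L} (S : Str L) (e : nat -> car S) (t : term L) : car S :=
  match t with
  | tvar k => e k
  | tapp f ts => fint S f (fun k => eval_term S e (ts k))
  end.

Fixpoint eval {L} (S : Str L) (dom : car S -> Prop) (e : nat -> car S)
         (p : formula L) : R :=
  match p with
  | fone => 1
  | fdist t1 t2 => dist S (eval_term S e t1) (eval_term S e t2)
  | frel r ts => rint S r (fun k => eval_term S e (ts k))
  | fplus p q => eval S dom e p + eval S dom e q
  | fscale c p => c * eval S dom e p
  | fsup x p => Rsup (fun v => exists a, dom a /\ v = eval S dom (upd e x a) p)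
  | finf x p => Rinf (fun v => exists a, dom a /\ v = eval S dom (upd e x a) p)
  end.

Definition evalM {L} (M : Str L) (e : nat -> car M) (p : formula L) : R :=
  eval M (fun _ => True) e p.

Definition is_charge_space (I : Type) (A : (I -> Prop) -> Prop)
           (mu : (I -> Prop) -> R) : Prop :=
  A (fun _ => False) /\
  (forall X, A X -> A (fun i => ~ X i)) /\
  (forall X Y, A X -> A Y -> A (fun i => X i \/ Y i)) /\
  (forall X, A X -> 0 <= mu X <= 1) /\
  mu (fun _ => True) = 1 /\
  (forall X Y, A X -> A Y -> (forall i, X i -> Y i -> False) ->
     mu (fun i => X i \/ Y i) = mu X + mu Y).

Definition integral (I : Type) (A : (I -> Prop) -> Prop)
           (mu : (I -> Prop) -> R) (f : I -> R) : R :=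
  Rsup (fun v => exists (n : nat) (P : nat -> I -> Prop) (c : nat -> R),
     (forall k, (k < n)%nat -> A (P k)) /\
     (forall i, exists k, (k < n)%nat /\ P k i) /\
     (forall k l i, (k < n)%nat -> (l < n)%nat -> P k i -> P l i -> k = l) /\
     (forall k i, (k < n)%nat -> P k i -> c k <= f i) /\
     v = rsum n (fun k => c k * mu (P k))).

Definition is_open {L} (M : Str L) (U : car M -> Prop) : Prop :=
  forall x, U x -> exists eps, eps > 0 /\ forall y, dist M x y < eps -> U y.

Definition is_borel {L} (M : Str L) (B : car M -> Prop) : Prop :=
  forall S : (car M -> Prop) -> Prop,
    (forall U, is_open M U -> S U) ->
    (forall U, S U -> S (fun x => ~ U x)) ->
    (forall U : nat -> car M -> Prop, (forall n, S (U n)) ->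
        S (fun x => exists n, U n x)) ->
    S B.

Definition measurable_map {L} (I : Type) (A : (I -> Prop) -> Prop) (M : Str L)
           (a : I -> car M) : Prop :=
  forall B, is_borel M B -> A (fun i => B (a i)).

Definition is_base {L} (M : Str L) (Bs : (car M -> Prop) -> Prop) : Prop :=
  (forall U, Bs U -> is_open M U) /\
  (forall U x, is_open M U -> U x ->
     exists V, Bs V /\ V x /\ forall y, V y -> U y).

(* |J| <= w(M) = (least cardinality of a base) + aleph_0 *)
Definition card_le_weight {L} (M : Str L) (J : Type) : Prop :=
  forall Bs, is_base M Bs ->
    exists g : J -> ({U | Bs U} + nat)%type,
      forall j1 j2, g j1 = g j2 -> j1 = j2.

Definition finite_type (X : Type) : Prop := exists l : list X, forall x, In x l.

Definition meanable {L} (I : Type) (A : (I -> Prop) -> Prop) (M : Str L) : Prop :=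
  finite_type (car M) \/
  forall (J : Type) (F : J -> I -> Prop),
    card_le_weight M J -> (forall j, A (F j)) -> A (fun i => forall j, F j i).

(* Elements are represented by maps I -> M (classes are taken implicitly:
   all operations are defined on representatives); quantifiers in M^mu
   range over measurable maps. *)
Definition Mmu {L} (I : Type) (A : (I -> Prop) -> Prop) (mu : (I -> Prop) -> R)
           (M : Str L) : Str L :=
  {| car := I -> car M;
     dist := fun a b => integral I A mu (fun i => dist M (a i) (b i));
     fint := fun f as_ => fun i => fint M f (fun k => as_ k i);
     rint := fun r as_ => integral I A mu (fun i => rint M r (fun k => as_ k i)) |}.

Definition evalMmu {L} (I : Type) (A : (I -> Prop) -> Prop) (mu : (I -> Prop) -> R)
           (M : Str L) (e : nat -> I -> car M) (p : formula L) : R :=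
  eval (Mmu I A mu M) (measurable_map I A M) e p.

(* By induction on the formula.  phi^M is Lipschitz in finitely many variables, so
   i |-> phi^M(a_i) has all its sets {f > r}, {f < r} in A as soon as A is closed
   under unions indexed by a dense subset D of M; then the charge integral is linear
   on such bounded functions, by approximation with step functions on a grid.
   Meanability provides D: M itself when M is finite, and otherwise the union of
   nested maximal 1/(n+1)-separated sets, which injects into every base.
   For [sup_x phi]: each measurable b gives int phi(a_i, b_i) <= int sup_x phi(a_i, x).
   Conversely, for eps > 0 the sets {i | phi(a_i, e) > sup_x phi(a_i, x) - eps}, e in D,
   lie in A and cover I; sending i to the least such e for a well-ordering of D gives
   a measurable b which is eps-optimal everywhere. *)

From Stdlib Require Import Reals Lra Lia Classical ClassicalEpsilon
  FunctionalExtensionality PropExtensionality ProofIrrelevance.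
From mathcomp Require ssreflect ssrbool eqtype boolp wochoice classical_sets.
Open Scope R_scope.
Set Bullet Behavior "Strict Subproofs".

Lemma pred_ext {X : Type} (P Q : X -> Prop) : (forall x, P x <-> Q x) -> P = Q.
Proof.
  intros H; apply functional_extensionality; intros x.
  apply propositional_extensionality; auto.
Qed.

Lemma rsum_ext n f g : (forall k, (k < n)%nat -> f k = g k) -> rsum n f = rsum n g.
Proof.
  induction n; simpl; intros H; auto.
  rewrite IHn, (H n) by (lia || (intros; apply H; lia)); auto.
Qed.

Lemma rsum_le n f g : (forall k, (k < n)%nat -> f k <= g k) -> rsum n f <= rsum n g.
Proof.
  induction n; simpl; intros H; [lra|].
  assert (f n <= g n) by (apply H; lia).
  assert (rsum n f <= rsum n g) by (apply IHn; intros; apply H; lia).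
  lra.
Qed.

Lemma rsum_plus n f g : rsum n (fun k => f k + g k) = rsum n f + rsum n g.
Proof. induction n; simpl; [lra | rewrite IHn; lra]. Qed.

Lemma rsum_scal n c f : rsum n (fun k => c * f k) = c * rsum n f.
Proof. induction n; simpl; [lra | rewrite IHn; lra]. Qed.

Lemma rsum_const n c : rsum n (fun _ => c) = INR n * c.
Proof. induction n; simpl rsum; [simpl; lra | rewrite IHn, S_INR; lra]. Qed.

Lemma rsum_nonneg n f : (forall k, (k < n)%nat -> 0 <= f k) -> 0 <= rsum n f.
Proof.
  intros H; replace 0 with (rsum n (fun _ => 0)) by (rewrite rsum_const; lra).
  now apply rsum_le.
Qed.

Lemma rsum_le_len n m f : (n <= m)%nat -> (forall k, 0 <= f k) -> rsum n f <= rsum m f.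
Proof. intros Hle Hf; induction Hle; simpl; [lra | specialize (Hf m); lra]. Qed.

Lemma rsum_app n1 n2 (f1 f2 : nat -> R) :
  rsum (n1 + n2) (fun k => if Nat.ltb k n1 then f1 k else f2 (k - n1)%nat) =
  rsum n1 f1 + rsum n2 f2.
Proof.
  induction n2; simpl.
  - rewrite Nat.add_0_r, Rplus_0_r; apply rsum_ext; intros k Hk.
    destruct (Nat.ltb_spec k n1); [auto | lia].
  - rewrite Nat.add_succ_r; simpl; rewrite IHn2.
    destruct (Nat.ltb_spec (n1 + n2) n1); [lia|].
    replace (n1 + n2 - n1)%nat with n2 by lia; lra.
Qed.

Lemma rsum_single n x (f : nat -> R) :
  (forall k, (k < n)%nat -> k <> x -> f k = 0) ->
  rsum n f = if Nat.ltb x n then f x else 0.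
Proof.
  induction n; intros H; simpl; auto.
  rewrite IHn by (intros; apply H; lia).
  destruct (Nat.ltb_spec x n), (Nat.ltb_spec x (S n)); try lia.
  - rewrite (H n) by lia; lra.
  - replace x with n by lia; lra.
  - rewrite (H n) by lia; lra.
Qed.

Lemma Rabs_le_inv a b : Rabs a <= b -> -b <= a <= b.
Proof. unfold Rabs; destruct Rcase_abs; lra. Qed.

Lemma Rle_forall_eps (x y : R) : (forall eps, eps > 0 -> x <= y + eps) -> x <= y.
Proof. intros H; destruct (Rle_or_lt x y); auto; specialize (H ((x - y) / 2)); lra. Qed.

Lemma inv_INR_S_lt (eps : R) : eps > 0 -> exists N : nat, / INR (S N) < eps.
Proof.
  intros He; destruct (archimed_cor1 eps He) as [N [HN HN0]].
  exists (pred N); now replace (S (pred N)) with N by lia.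
Qed.

Lemma Rsup_ub (E : R -> Prop) u x : (forall y, E y -> y <= u) -> E x -> x <= Rsup E.
Proof.
  intros Hu Ex; unfold Rsup; destruct excluded_middle_informative as [H|H].
  - destruct completeness as [s Hs]; simpl; now apply Hs.
  - exfalso; apply H; split; [exists u; exact Hu | eauto].
Qed.

Lemma Rsup_lub (E : R -> Prop) u : (exists x, E x) -> (forall y, E y -> y <= u) -> Rsup E <= u.
Proof.
  intros He Hu; unfold Rsup; destruct excluded_middle_informative as [H|H].
  - destruct completeness as [s Hs]; simpl; now apply Hs.
  - exfalso; apply H; split; [exists u; exact Hu | auto].
Qed.

Module OrderBridge.
Import mathcomp.boot.ssreflect mathcomp.boot.ssrbool mathcomp.boot.eqtype.
Import boolp wochoice classical_sets.

Lemma well_ordering (T : Type) : exists R : T -> T -> Prop,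
  forall P : T -> Prop, (exists x, P x) -> exists! z, P z /\ forall y, P y -> R z y.
Proof.
have [R HR] := well_ordering_principle (classicType T).
exists (fun x y => R x y) => P [x Px].
have [|z [[Pz lb] uniq]] := HR (fun t => `[< P t >]); first by exists x; apply/asboolP.
exists z; split; first by split; [move: Pz => /asboolP | move=> y Py; apply: lb; apply/asboolP].
move=> z' [Pz' lb']; apply: uniq; split; first by apply/asboolP.
by move=> y /asboolP Py; apply: lb'.
Qed.

Lemma zorn_chains (T : Type) (P : (T -> Prop) -> Prop) :
  (forall F : (T -> Prop) -> Prop, (forall X, F X -> P X) ->
     (forall X Y, F X -> F Y -> (forall t, X t -> Y t) \/ (forall t, Y t -> X t)) ->
     P (fun t => exists X, F X /\ X t)) ->
  exists X, P X /\ forall Y, (forall t, X t -> Y t) -> P Y -> forall t, Y t -> X t.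
Proof.
move=> H.
have [F FP Ftot|X [PX Xmax]] := @Zorn_bigcup T P.
  have -> : bigcup F (fun X => X) = (fun t => exists X, F X /\ X t).
    by apply: funext => t; apply: propext; split => [[X FX Xt]|[X [FX Xt]]]; exists X.
  exact: H.
exists X; split => // Y XY PY t Yt.
apply: Classical_Prop.NNPP => nXt; apply: (Xmax Y) => //; split => // YX.
exact/nXt/YX.
Qed.
End OrderBridge.

(* The step function [sum_(k < s_len) s_val k * 1_(s_set k)]; the sets may overlap. *)
Record simple (I : Type) := Simple {
  s_len : nat;
  s_set : nat -> I -> Prop;
  s_val : nat -> R }.
Arguments Simple {I}. Arguments s_len {I}. Arguments s_set {I}. Arguments s_val {I}.

Section Charge.
Variables (I : Type) (A : (I -> Prop) -> Prop) (mu : (I -> Prop) -> R).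
Hypothesis HA : is_charge_space I A mu.

Lemma A_false : A (fun _ => False). Proof. apply HA. Qed.
Lemma A_compl X : A X -> A (fun i => ~ X i). Proof. apply HA. Qed.
Lemma A_or X Y : A X -> A Y -> A (fun i => X i \/ Y i). Proof. apply HA. Qed.

Lemma A_ext X Y : (forall i, X i <-> Y i) -> A X -> A Y.
Proof. intros H; now rewrite (pred_ext X Y H). Qed.

Lemma A_and X Y : A X -> A Y -> A (fun i => X i /\ Y i).
Proof.
  intros HX HY; apply (A_ext (fun i => ~ (~ X i \/ ~ Y i))); [intros; tauto|].
  apply A_compl, A_or; now apply A_compl.
Qed.

Lemma A_const (P : Prop) : A (fun _ => P).
Proof.
  destruct (classic P).
  - apply (A_ext (fun _ => ~ False)); [tauto | apply A_compl, A_false].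
  - apply (A_ext (fun _ => False)); [tauto | apply A_false].
Qed.

Lemma mu_ext X Y : (forall i, X i <-> Y i) -> mu X = mu Y.
Proof. intros H; now rewrite (pred_ext X Y H). Qed.

Lemma mu_range X : A X -> 0 <= mu X <= 1. Proof. apply HA. Qed.
Lemma mu_true : mu (fun _ => True) = 1. Proof. apply HA. Qed.
Lemma mu_add X Y : A X -> A Y -> (forall i, X i -> Y i -> False) ->
  mu (fun i => X i \/ Y i) = mu X + mu Y.
Proof. apply HA. Qed.

Lemma mu_empty X : (forall i, ~ X i) -> mu X = 0.
Proof.
  intros HX; pose proof (mu_add _ _ A_false A_false (fun _ h _ => h)) as H; cbv beta in H.
  rewrite (mu_ext (fun i => False \/ False) (fun _ => False)) in H by tauto.
  rewrite (mu_ext X (fun _ => False)) by firstorder; lra.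
Qed.

Lemma mu_split Y X : A X -> A Y ->
  mu Y = mu (fun i => Y i /\ X i) + mu (fun i => Y i /\ ~ X i).
Proof.
  intros HX HY; rewrite <- mu_add.
  - apply mu_ext; intros; tauto.
  - now apply A_and.
  - now apply A_and, A_compl.
  - intros i [] []; auto.
Qed.

Lemma charge_space_inhabited : exists i : I, True.
Proof.
  apply NNPP; intros Hn; pose proof mu_true as H1.
  rewrite mu_empty in H1; [lra | intros i _; eauto].
Qed.

Definition ind (X : I -> Prop) (i : I) : R :=
  if excluded_middle_informative (X i) then 1 else 0.

Definition sfun (s : simple I) (i : I) : R :=
  rsum (s_len s) (fun k => s_val s k * ind (s_set s k) i).
Definition sint (s : simple I) : R :=
  rsum (s_len s) (fun k => s_val s k * mu (s_set s k)).
Definition s_measurable (s : simple I) := forall k, (k < s_len s)%nat -> A (s_set s k).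

Definition s_app (s t : simple I) : simple I :=
  Simple (s_len s + s_len t)
    (fun k => if Nat.ltb k (s_len s) then s_set s k else s_set t (k - s_len s)%nat)
    (fun k => if Nat.ltb k (s_len s) then s_val s k else s_val t (k - s_len s)%nat).
Definition s_scale (r : R) (s : simple I) : simple I :=
  Simple (s_len s) (s_set s) (fun k => r * s_val s k).
Definition s_const (c : R) : simple I := Simple 1 (fun _ _ => True) (fun _ => c).

Lemma sfun_app s t i : sfun (s_app s t) i = sfun s i + sfun t i.
Proof.
  unfold sfun; simpl; rewrite <- rsum_app; apply rsum_ext; intros k _.
  now destruct (Nat.ltb k (s_len s)).
Qed.

Lemma sint_app s t : sint (s_app s t) = sint s + sint t.
Proof.
  unfold sint; simpl; rewrite <- rsum_app; apply rsum_ext; intros k _.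
  now destruct (Nat.ltb k (s_len s)).
Qed.

Lemma s_measurable_app s t : s_measurable s -> s_measurable t -> s_measurable (s_app s t).
Proof.
  intros Hs Ht k Hk; simpl in *.
  destruct (Nat.ltb_spec k (s_len s)); [auto | apply Ht; lia].
Qed.

Lemma sfun_scale r s i : sfun (s_scale r s) i = r * sfun s i.
Proof. unfold sfun; simpl; rewrite <- rsum_scal; apply rsum_ext; intros; ring. Qed.

Lemma sint_scale r s : sint (s_scale r s) = r * sint s.
Proof. unfold sint; simpl; rewrite <- rsum_scal; apply rsum_ext; intros; ring. Qed.

Lemma sfun_const c i : sfun (s_const c) i = c.
Proof. unfold sfun, ind; simpl; destruct excluded_middle_informative; [lra | tauto]. Qed.

Lemma sint_const c : sint (s_const c) = c.
Proof. unfold sint; simpl; rewrite mu_true; lra. Qed.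

Lemma s_measurable_const c : s_measurable (s_const c).
Proof. intros k _; exact (A_const True). Qed.

(* The restriction to [X] and the offset [c0] make positivity provable by
   induction on the number of steps. *)
Lemma sint_restrict_nonneg n P c : (forall k, (k < n)%nat -> A (P k)) ->
  forall X c0, A X ->
  (forall i, X i -> 0 <= c0 + rsum n (fun k => c k * ind (P k) i)) ->
  0 <= c0 * mu X + rsum n (fun k => c k * mu (fun i => P k i /\ X i)).
Proof.
  induction n; intros HP X c0 HX Hpos; simpl.
  - destruct (classic (exists i, X i)) as [[i Xi] | NE].
    + specialize (Hpos i Xi); simpl in Hpos; pose proof (mu_range X HX); nra.
    + rewrite mu_empty; [lra | intros i Xi; eauto].
  - assert (HPn : A (P n)) by (apply HP; lia).
    assert (HP' : forall k, (k < n)%nat -> A (P k)) by (intros; apply HP; lia).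
    assert (Hin : 0 <= (c0 + c n) * mu (fun i => X i /\ P n i) +
                   rsum n (fun k => c k * mu (fun i => P k i /\ (X i /\ P n i)))).
    { apply IHn; auto; [now apply A_and|].
      intros i [Xi Pi]; specialize (Hpos i Xi); simpl in Hpos.
      unfold ind at 2 in Hpos; destruct excluded_middle_informative; [lra | tauto]. }
    assert (Hout : 0 <= c0 * mu (fun i => X i /\ ~ P n i) +
                   rsum n (fun k => c k * mu (fun i => P k i /\ (X i /\ ~ P n i)))).
    { apply IHn; auto; [now apply A_and, A_compl|].
      intros i [Xi Pi]; specialize (Hpos i Xi); simpl in Hpos.
      unfold ind at 2 in Hpos; destruct excluded_middle_informative; [tauto | lra]. }
    assert (Hsplit : rsum n (fun k => c k * mu (fun i => P k i /\ X i)) =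
      rsum n (fun k => c k * mu (fun i => P k i /\ (X i /\ P n i))) +
      rsum n (fun k => c k * mu (fun i => P k i /\ (X i /\ ~ P n i)))).
    { rewrite <- rsum_plus; apply rsum_ext; intros k Hk.
      rewrite (mu_split (fun i => P k i /\ X i) (P n)) by (auto; apply A_and; auto).
      rewrite (mu_ext (fun i => (P k i /\ X i) /\ P n i) (fun i => P k i /\ X i /\ P n i)),
        (mu_ext (fun i => (P k i /\ X i) /\ ~ P n i) (fun i => P k i /\ X i /\ ~ P n i))
        by (intros; tauto).
      ring. }
    rewrite (mu_split X (P n)), Hsplit by auto.
    rewrite (mu_ext (fun i => P n i /\ X i) (fun i => X i /\ P n i)) by (intros; tauto).
    lra.
Qed.

Lemma sint_nonneg s : s_measurable s -> (forall i, 0 <= sfun s i) -> 0 <= sint s.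
Proof.
  intros Hs Hpos.
  pose proof (sint_restrict_nonneg (s_len s) (s_set s) (s_val s) Hs (fun _ => True) 0
    (A_const True)) as H.
  unfold sint; rewrite (rsum_ext _ _ (fun k => s_val s k * mu (fun i => s_set s k i /\ True)))
    by (intros; f_equal; apply mu_ext; tauto).
  assert (0 <= 0 * mu (fun _ => True) +
    rsum (s_len s) (fun k => s_val s k * mu (fun i => s_set s k i /\ True))); [|lra].
  apply H; intros i _; specialize (Hpos i); unfold sfun in Hpos; lra.
Qed.

Lemma sint_le s t : s_measurable s -> s_measurable t ->
  (forall i, sfun s i <= sfun t i) -> sint s <= sint t.
Proof.
  intros Hs Ht Hst.
  assert (H : 0 <= sint (s_app t (s_scale (-1) s))); [|rewrite sint_app, sint_scale in H; lra].
  apply sint_nonneg; [now apply s_measurable_app|].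
  intros i; rewrite sfun_app, sfun_scale; specialize (Hst i); lra.
Qed.

Definition s_partition (s : simple I) :=
  (forall i, exists k, (k < s_len s)%nat /\ s_set s k i) /\
  (forall k l i, (k < s_len s)%nat -> (l < s_len s)%nat -> s_set s k i -> s_set s l i -> k = l).

Lemma sfun_partition s i k : s_partition s -> (k < s_len s)%nat -> s_set s k i ->
  sfun s i = s_val s k.
Proof.
  intros [_ Huniq] Hk Hi; unfold sfun; rewrite (rsum_single _ k).
  - destruct (Nat.ltb_spec k (s_len s)); [|lia].
    unfold ind; destruct excluded_middle_informative; [lra | tauto].
  - intros l Hl Hlk; unfold ind; destruct excluded_middle_informative as [Hl'|]; [|lra].
    exfalso; apply Hlk; eauto.
Qed.

Definition Ameas (f : I -> R) := forall r, A (fun i => r < f i) /\ A (fun i => f i < r).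
Definition bounded (f : I -> R) := exists B, forall i, Rabs (f i) <= B.

Definition lower_step (f : I -> R) (s : simple I) :=
  s_measurable s /\ s_partition s /\
  forall k i, (k < s_len s)%nat -> s_set s k i -> s_val s k <= f i.

Lemma lower_step_le f s : lower_step f s -> forall i, sfun s i <= f i.
Proof.
  intros (_ & Hpart & Hval) i; destruct (proj1 Hpart i) as [k [Hk Hi]].
  rewrite (sfun_partition s i k); auto.
Qed.

Lemma lower_step_const f b : (forall i, b <= f i) -> lower_step f (s_const b).
Proof.
  intros Hb; split; [apply s_measurable_const | split; [split|]]; simpl.
  - intros i; exists 0%nat; split; [lia | exact Logic.I].
  - intros; lia.
  - intros; apply Hb.
Qed.

Lemma integral_lower f :
  integral I A mu f = Rsup (fun v => exists s, lower_step f s /\ v = sint s).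
Proof.
  unfold integral; f_equal; apply pred_ext; intros v; split.
  - intros (n & P & c & H1 & H2 & H3 & H4 & ->).
    exists (Simple n P c); repeat split; auto.
  - intros [[n P c] [(H1 & (H2 & H3) & H4) ->]].
    exists n, P, c; repeat split; auto.
Qed.

Lemma integral_le_sint f t : bounded f -> s_measurable t ->
  (forall i, f i <= sfun t i) -> integral I A mu f <= sint t.
Proof.
  intros [B HB] Ht Hft; rewrite integral_lower; apply Rsup_lub.
  - exists (sint (s_const (- B))), (s_const (- B)); split; auto; apply lower_step_const.
    intros i; specialize (HB i); apply Rabs_le_inv in HB; lra.
  - intros v [s [Hs ->]]; apply sint_le; [apply Hs | auto |].
    intros i; pose proof (lower_step_le f s Hs i); specialize (Hft i); lra.
Qed.

Lemma sint_lower_le_integral f s : bounded f -> lower_step f s -> sint s <= integral I A mu f.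
Proof.
  intros [B HB] Hs; rewrite integral_lower; apply (Rsup_ub _ B); [| eauto].
  intros v [s' [Hs' ->]]; rewrite <- (sint_const B).
  apply sint_le; [apply Hs' | apply s_measurable_const |].
  intros i; rewrite sfun_const; pose proof (lower_step_le f s' Hs' i).
  specialize (HB i); apply Rabs_le_inv in HB; lra.
Qed.

Lemma grid_cover (t0 h : R) : h > 0 -> forall K x, t0 <= x < t0 + INR K * h ->
  exists k, (k < K)%nat /\ t0 + INR k * h <= x < t0 + INR k * h + h.
Proof.
  intros Hh K; induction K; intros x Hx; [simpl in Hx; lra|].
  destruct (Rlt_or_le x (t0 + INR K * h)).
  - destruct (IHK x) as [k [Hk1 Hk2]]; [lra|]; exists k; split; auto; lia.
  - exists K; split; [lia|]; rewrite S_INR in Hx; lra.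
Qed.

Lemma grid_unique (t0 h : R) : h > 0 -> forall k l x,
  t0 + INR k * h <= x < t0 + INR k * h + h -> t0 + INR l * h <= x < t0 + INR l * h + h ->
  k = l.
Proof.
  intros Hh k l x Hk Hl; destruct (Nat.lt_total k l) as [E|[E|E]]; auto; exfalso.
  - assert (INR k + 1 <= INR l) by (rewrite <- S_INR; apply le_INR; lia); nra.
  - assert (INR l + 1 <= INR k) by (rewrite <- S_INR; apply le_INR; lia); nra.
Qed.

(* The level sets of [f] on a grid of mesh [h]. *)
Lemma lower_step_grid f h : Ameas f -> bounded f -> h > 0 ->
  exists s, lower_step f s /\ forall i, f i <= sfun s i + h.
Proof.
  intros Hm [B HB] Hh.
  destruct (INR_archimed h (2 * B + 1) Hh) as [K HK].
  set (t0 := - B - 1).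
  set (s := Simple K (fun k i => t0 + INR k * h <= f i < t0 + INR k * h + h)
                     (fun k => t0 + INR k * h)).
  assert (Hs : lower_step f s).
  { split; [|split; [split|]]; simpl.
    - intros k _; apply A_and; [|apply Hm].
      apply (A_ext (fun i => ~ f i < t0 + INR k * h)); [intros; lra|].
      apply A_compl, Hm.
    - intros i; specialize (HB i); apply Rabs_le_inv in HB.
      apply grid_cover; unfold t0; lra.
    - intros k l i _ _; now apply grid_unique.
    - intros k i _ [Hk _]; exact Hk. }
  exists s; split; auto.
  intros i; destruct (proj1 (proj1 (proj2 Hs)) i) as [k [Hk Hi]].
  rewrite (sfun_partition s i k) by (auto; apply Hs); simpl in *; lra.
Qed.

Lemma sint_le_integral f s : Ameas f -> bounded f -> s_measurable s ->
  (forall i, sfun s i <= f i) -> sint s <= integral I A mu f.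
Proof.
  intros Hm Hb Hs Hsf; apply Rle_forall_eps; intros eps He.
  destruct (lower_step_grid f eps Hm Hb He) as [s' [Hs' Hup]].
  assert (sint s <= sint (s_app s' (s_const eps))).
  { apply sint_le; auto.
    - apply s_measurable_app; [apply Hs' | apply s_measurable_const].
    - intros i; rewrite sfun_app, sfun_const; specialize (Hsf i); specialize (Hup i); lra. }
  rewrite sint_app, sint_const in H.
  assert (sint s' <= integral I A mu f); [|lra].
  now apply sint_lower_le_integral.
Qed.

Definition simple_approx (f : I -> R) (v : R) := forall eps, eps > 0 ->
  (exists s, s_measurable s /\ (forall i, sfun s i <= f i) /\ v - eps <= sint s) /\
  (exists t, s_measurable t /\ (forall i, f i <= sfun t i) /\ sint t <= v + eps).

Lemma simple_approx_integral f : Ameas f -> bounded f -> simple_approx f (integral I A mu f).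
Proof.
  intros Hm Hb eps He.
  destruct (lower_step_grid f eps Hm Hb He) as [s [Hs Hup]].
  assert (Hlow : sint s <= integral I A mu f) by now apply sint_lower_le_integral.
  assert (Hst : s_measurable (s_app s (s_const eps)))
    by (apply s_measurable_app; [apply Hs | apply s_measurable_const]).
  assert (Hup' : forall i, f i <= sfun (s_app s (s_const eps)) i)
    by (intros; rewrite sfun_app, sfun_const; auto).
  assert (Hhigh : integral I A mu f <= sint (s_app s (s_const eps)))
    by now apply integral_le_sint.
  rewrite sint_app, sint_const in Hhigh; split.
  - exists s; repeat split; [apply Hs | apply lower_step_le; auto | lra].
  - exists (s_app s (s_const eps)); repeat split; auto.
    rewrite sint_app, sint_const; lra.
Qed.

Lemma integral_eq_simple_approx f v : Ameas f -> bounded f -> simple_approx f v ->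
  integral I A mu f = v.
Proof.
  intros Hm Hb Happ; apply Rle_antisym; apply Rle_forall_eps; intros eps He;
    destruct (Happ eps He) as [(s & Hs & Hsf & Hsv) (t & Ht & Htf & Htv)].
  - assert (integral I A mu f <= sint t) by now apply integral_le_sint.
    lra.
  - assert (sint s <= integral I A mu f) by (apply sint_le_integral; auto); lra.
Qed.

Lemma simple_approx_plus f g u v : simple_approx f u -> simple_approx g v ->
  simple_approx (fun i => f i + g i) (u + v).
Proof.
  intros Hf Hg eps He.
  destruct (Hf (eps / 2)) as [(s1 & Hs1 & L1 & S1) (t1 & Ht1 & U1 & T1)]; [lra|].
  destruct (Hg (eps / 2)) as [(s2 & Hs2 & L2 & S2) (t2 & Ht2 & U2 & T2)]; [lra|].
  split.
  - exists (s_app s1 s2); split; [now apply s_measurable_app|].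
    rewrite sint_app; split; [|lra].
    intros i; rewrite sfun_app; specialize (L1 i); specialize (L2 i); lra.
  - exists (s_app t1 t2); split; [now apply s_measurable_app|].
    rewrite sint_app; split; [|lra].
    intros i; rewrite sfun_app; specialize (U1 i); specialize (U2 i); lra.
Qed.

Lemma simple_approx_scale r f v : simple_approx f v ->
  simple_approx (fun i => r * f i) (r * v).
Proof.
  intros Hf eps He.
  assert (Hr : 0 <= Rabs r) by apply Rabs_pos.
  set (e := eps / (Rabs r + 1)).
  assert (He' : e > 0) by (unfold e; apply Rdiv_lt_0_compat; lra).
  assert (Hre : Rabs r * e <= eps).
  { unfold e; apply (Rmult_le_reg_r (Rabs r + 1)); [lra|].
    field_simplify; nra. }
  destruct (Hf e He') as [(s & Hs & Ls & Ss) (t & Ht & Ut & St)].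
  destruct (Rle_or_lt 0 r) as [Hr0 | Hr0];
    [rewrite Rabs_pos_eq in Hre by auto | rewrite Rabs_left in Hre by auto]; split.
  - exists (s_scale r s); repeat split; [exact Hs | | rewrite sint_scale; nra].
    intros i; rewrite sfun_scale; specialize (Ls i); nra.
  - exists (s_scale r t); repeat split; [exact Ht | | rewrite sint_scale; nra].
    intros i; rewrite sfun_scale; specialize (Ut i); nra.
  - exists (s_scale r t); repeat split; [exact Ht | | rewrite sint_scale; nra].
    intros i; rewrite sfun_scale; specialize (Ut i); nra.
  - exists (s_scale r s); repeat split; [exact Hs | | rewrite sint_scale; nra].
    intros i; rewrite sfun_scale; specialize (Ls i); nra.
Qed.

Lemma simple_approx_const c : simple_approx (fun _ => c) c.
Proof.
  intros eps He; split; exists (s_const c); rewrite sint_const;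
    repeat split; try apply s_measurable_const; intros; rewrite ?sfun_const; lra.
Qed.

Lemma Ameas_const c : Ameas (fun _ => c).
Proof. intros r; split; apply A_const. Qed.

Lemma bounded_const c : bounded (fun _ => c).
Proof. exists (Rabs c); intros; lra. Qed.

Lemma integral_const c : integral I A mu (fun _ => c) = c.
Proof.
  apply integral_eq_simple_approx;
    [apply Ameas_const | apply bounded_const | apply simple_approx_const].
Qed.

Lemma integral_plus f g : Ameas f -> bounded f -> Ameas g -> bounded g ->
  Ameas (fun i => f i + g i) -> bounded (fun i => f i + g i) ->
  integral I A mu (fun i => f i + g i) = integral I A mu f + integral I A mu g.
Proof.
  intros; apply integral_eq_simple_approx; auto.
  apply simple_approx_plus; now apply simple_approx_integral.
Qed.

Lemma integral_scale r f : Ameas f -> bounded f ->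
  Ameas (fun i => r * f i) -> bounded (fun i => r * f i) ->
  integral I A mu (fun i => r * f i) = r * integral I A mu f.
Proof.
  intros; apply integral_eq_simple_approx; auto.
  apply simple_approx_scale; now apply simple_approx_integral.
Qed.

Lemma integral_le_shift f g c : Ameas f -> bounded f -> Ameas g -> bounded g ->
  (forall i, f i + c <= g i) -> integral I A mu f + c <= integral I A mu g.
Proof.
  intros Hmf Hbf Hmg Hbg Hfg; apply Rle_forall_eps; intros eps He.
  destruct (simple_approx_integral f Hmf Hbf eps He) as [(s & Hs & Hsf & Hsv) _].
  assert (sint (s_app s (s_const c)) <= integral I A mu g);
    [|rewrite sint_app, sint_const in H; lra].
  apply sint_le_integral; auto.
  - apply s_measurable_app; [auto | apply s_measurable_const].
  - intros i; rewrite sfun_app, sfun_const; specialize (Hsf i); specialize (Hfg i); lra.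
Qed.
End Charge.

Lemma eval_finf {L} (S : Str L) dom e x p :
  eval S dom e (finf x p) = - eval S dom e (fsup x (fscale (-1) p)).
Proof.
  simpl; unfold Rinf; do 2 f_equal; apply pred_ext; intros v.
  split; intros [a [Ha Hv]]; exists a; split; auto; lra.
Qed.

Lemma upd_same {X : Type} (y : nat -> X) x : upd y x (y x) = y.
Proof.
  apply functional_extensionality; intros k; unfold upd.
  destruct (Nat.eqb_spec k x); congruence.
Qed.

Lemma upd_pointwise {X Y : Type} (a : nat -> X -> Y) x b i :
  (fun k => upd a x b k i) = upd (fun k => a k i) x (b i).
Proof. apply functional_extensionality; intros k; unfold upd; now destruct (Nat.eqb k x). Qed.

Section Lipschitz.
Variables (L : Lang) (M : Str L).
Hypothesis HM : is_structure L M.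

Lemma dist_refl x : dist M x x = 0. Proof. apply HM. Qed.
Lemma dist_eq0 x y : dist M x y = 0 -> x = y. Proof. apply HM. Qed.
Lemma dist_sym x y : dist M x y = dist M y x. Proof. apply HM. Qed.
Lemma dist_triangle x y z : dist M x z <= dist M x y + dist M y z. Proof. apply HM. Qed.
Lemma dist_le1 x y : dist M x y <= 1. Proof. apply HM. Qed.

Lemma dist_nonneg x y : 0 <= dist M x y.
Proof. pose proof (dist_triangle x y x); rewrite dist_refl, (dist_sym y x) in H; lra. Qed.

Definition dsum N (x y : nat -> car M) := rsum N (fun k => dist M (x k) (y k)).

Lemma dsum_nonneg N x y : 0 <= dsum N x y.
Proof. apply rsum_nonneg; intros; apply dist_nonneg. Qed.

Lemma dsum_le_len N N' x y : (N <= N')%nat -> dsum N x y <= dsum N' x y.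
Proof. intros; apply rsum_le_len; auto; intros; apply dist_nonneg. Qed.

Lemma dsum_le N x y : dsum N x y <= INR N.
Proof.
  unfold dsum; rewrite <- (Rmult_1_r (INR N)), <- rsum_const.
  apply rsum_le; intros; apply dist_le1.
Qed.

Lemma dsum_sym N x y : dsum N x y = dsum N y x.
Proof. apply rsum_ext; intros; apply dist_sym. Qed.

Lemma dsum_upd N y y' x a : dsum N (upd y x a) (upd y' x a) <= dsum N y y'.
Proof.
  apply rsum_le; intros k _; unfold upd; destruct (Nat.eqb k x); [|lra].
  rewrite dist_refl; apply dist_nonneg.
Qed.

Lemma dsum_upd_point N y x a a' : dsum N (upd y x a) (upd y x a') <= dist M a a'.
Proof.
  unfold dsum; rewrite (rsum_single N x).
  - destruct (Nat.ltb x N); [unfold upd; rewrite Nat.eqb_refl; lra | apply dist_nonneg].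
  - intros k _ Hk; unfold upd; apply Nat.eqb_neq in Hk; rewrite Hk; apply dist_refl.
Qed.

Definition lipschitz N C (F : (nat -> car M) -> R) :=
  0 <= C /\ forall x y, Rabs (F x - F y) <= C * dsum N x y.

Lemma lipschitz_weaken N N' C C' F : lipschitz N C F -> (N <= N')%nat -> C <= C' ->
  lipschitz N' C' F.
Proof.
  intros [HC HF] HN HC'; split; [lra|]; intros x y; specialize (HF x y).
  pose proof (dsum_le_len N N' x y HN); pose proof (dsum_nonneg N x y); nra.
Qed.

Lemma lipschitz_const c : lipschitz 0 0 (fun _ => c).
Proof. split; [lra|]; intros; rewrite Rminus_diag, Rabs_R0; unfold dsum; simpl; lra. Qed.

Lemma lipschitz_plus N1 C1 F N2 C2 G : lipschitz N1 C1 F -> lipschitz N2 C2 G ->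
  lipschitz (Nat.max N1 N2) (C1 + C2) (fun x => F x + G x).
Proof.
  intros HF HG.
  destruct (lipschitz_weaken _ (Nat.max N1 N2) _ C1 _ HF) as [HF0 HF']; [lia | lra |].
  destruct (lipschitz_weaken _ (Nat.max N1 N2) _ C2 _ HG) as [HG0 HG']; [lia | lra |].
  split; [lra|]; intros x y; specialize (HF' x y); specialize (HG' x y).
  replace (F x + G x - (F y + G y)) with ((F x - F y) + (G x - G y)) by ring.
  pose proof (Rabs_triang (F x - F y) (G x - G y)); lra.
Qed.

Lemma lipschitz_scale N C F c : lipschitz N C F -> lipschitz N (Rabs c * C) (fun x => c * F x).
Proof.
  intros [HC HF]; pose proof (Rabs_pos c); split; [nra|]; intros x y.
  replace (c * F x - c * F y) with (c * (F x - F y)) by ring.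
  rewrite Rabs_mult, Rmult_assoc; apply Rmult_le_compat_l; auto.
Qed.

Lemma lipschitz_upd N C F x d : lipschitz N C F -> lipschitz N C (fun y => F (upd y x d)).
Proof.
  intros [HC HF]; split; auto; intros y y'.
  specialize (HF (upd y x d) (upd y' x d)); pose proof (dsum_upd N y y' x d); nra.
Qed.

Variable m0 : car M.

Lemma lipschitz_bound N C F : lipschitz N C F ->
  forall x, Rabs (F x) <= Rabs (F (fun _ => m0)) + C * INR N.
Proof.
  intros [HC HF] x; specialize (HF x (fun _ => m0)).
  pose proof (dsum_le N x (fun _ => m0)).
  pose proof (Rabs_triang_inv (F x) (F (fun _ => m0))); nra.
Qed.

Definition supF x (F : (nat -> car M) -> R) (y : nat -> car M) :=
  Rsup (fun v => exists a, True /\ v = F (upd y x a)).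

Lemma supF_ub x F B y a : (forall z, Rabs (F z) <= B) -> F (upd y x a) <= supF x F y.
Proof.
  intros HB; apply (Rsup_ub _ B); [|eauto].
  intros v [b [_ ->]]; specialize (HB (upd y x b)); apply Rabs_le_inv in HB; lra.
Qed.

Lemma supF_lub x F y u : (forall a, F (upd y x a) <= u) -> supF x F y <= u.
Proof.
  intros H; apply Rsup_lub; [exists (F (upd y x m0)), m0; auto | intros v [b [_ ->]]; auto].
Qed.

Lemma lipschitz_sup N C F x : lipschitz N C F -> lipschitz N C (supF x F).
Proof.
  intros HF; pose proof (lipschitz_bound N C F HF) as HB; destruct HF as [HC HF].
  assert (Hone : forall y y', supF x F y <= supF x F y' + C * dsum N y y').
  { intros y y'; apply supF_lub; intros a.
    pose proof (supF_ub x F _ y' a HB).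
    specialize (HF (upd y x a) (upd y' x a)); apply Rabs_le_inv in HF.
    pose proof (dsum_upd N y y' x a); nra. }
  split; auto; intros y y'.
  pose proof (Hone y y'); pose proof (Hone y' y); rewrite (dsum_sym N y' y) in *.
  apply Rabs_le; lra.
Qed.

Definition term_lipschitz N C (t : term L) := forall x y,
  dist M (eval_term M x t) (eval_term M y t) <= C * dsum N x y.

Lemma term_lipschitz_weaken N N' C C' t : term_lipschitz N C t -> (N <= N')%nat ->
  C <= C' -> 0 <= C -> term_lipschitz N' C' t.
Proof.
  intros H HN HC H0 x y; specialize (H x y).
  pose proof (dsum_le_len N N' x y HN); pose proof (dsum_nonneg N x y); nra.
Qed.

Lemma terms_lipschitz_uniform (ts : nat -> term L) :
  (forall k, exists N C, 0 <= C /\ term_lipschitz N C (ts k)) ->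
  forall n, exists N C, 0 <= C /\ forall k, (k < n)%nat -> term_lipschitz N C (ts k).
Proof.
  intros Hts n; induction n as [|n (N1 & C1 & HC1 & H1)].
  - exists 0%nat, 0; split; [lra | intros; lia].
  - destruct (Hts n) as (N2 & C2 & HC2 & H2).
    exists (Nat.max N1 N2), (C1 + C2); split; [lra|]; intros k Hk.
    destruct (Nat.eq_dec k n) as [->|].
    + apply (term_lipschitz_weaken N2 _ C2); auto; [lia | lra].
    + apply (term_lipschitz_weaken N1 _ C1); auto; [apply H1; lia | lia | lra].
Qed.

Lemma symbol_lipschitz n N C c (ts : nat -> term L) x y :
  0 <= C -> (forall k, (k < n)%nat -> term_lipschitz N C (ts k)) ->
  c * rsum n (fun k => dist M (eval_term M x (ts k)) (eval_term M y (ts k)))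
  <= Rabs c * (INR n * C) * dsum N x y.
Proof.
  intros HC Hts.
  set (s := rsum n _).
  assert (Hs0 : 0 <= s) by (apply rsum_nonneg; intros; apply dist_nonneg).
  assert (Hs : s <= INR n * (C * dsum N x y)).
  { unfold s; rewrite <- rsum_const; apply rsum_le; intros k Hk; apply (Hts k Hk). }
  pose proof (Rle_abs c); pose proof (Rabs_pos c).
  apply Rle_trans with (Rabs c * s); [nra|].
  rewrite !Rmult_assoc; apply Rmult_le_compat_l; auto; lra.
Qed.

Lemma term_lipschitz_exists t : exists N C, 0 <= C /\ term_lipschitz N C t.
Proof.
  induction t as [k | f ts IH].
  - exists (S k), 1; split; [lra|]; intros x y; unfold dsum; simpl.
    pose proof (rsum_nonneg k (fun j => dist M (x j) (y j)) (fun j _ => dist_nonneg _ _)); lra.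
  - destruct (terms_lipschitz_uniform ts IH (Fari L f)) as (N & C & HC & H).
    exists N, (Rabs (Flip L f) * (INR (Fari L f) * C)); split.
    + pose proof (Rabs_pos (Flip L f)); pose proof (pos_INR (Fari L f)).
      apply Rmult_le_pos; [|apply Rmult_le_pos]; auto.
    + intros x y; simpl; eapply Rle_trans; [apply HM | now apply symbol_lipschitz].
Qed.

Lemma formula_lipschitz p : exists N C, lipschitz N C (fun x => evalM M x p).
Proof.
  induction p as [| t1 t2 | r ts | p (N1 & C1 & H1) q (N2 & C2 & H2) | c p (N & C & H)
                 | x p (N & C & H) | x p (N & C & H)].
  - exists 0%nat, 0; apply (lipschitz_const 1).
  - destruct (term_lipschitz_exists t1) as (N1 & C1 & HC1 & H1).
    destruct (term_lipschitz_exists t2) as (N2 & C2 & HC2 & H2).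
    exists (Nat.max N1 N2), (C1 + C2); split; [lra|]; intros x y; unfold evalM; simpl.
    apply (term_lipschitz_weaken _ (Nat.max N1 N2) _ C1) in H1; try lia; try lra.
    apply (term_lipschitz_weaken _ (Nat.max N1 N2) _ C2) in H2; try lia; try lra.
    specialize (H1 x y); specialize (H2 x y).
    set (a := eval_term M x t1) in *; set (b := eval_term M x t2) in *.
    set (a' := eval_term M y t1) in *; set (b' := eval_term M y t2) in *.
    pose proof (dist_triangle a a' b); pose proof (dist_triangle a' b' b).
    pose proof (dist_triangle a' a b'); pose proof (dist_triangle a b b').
    rewrite (dist_sym b' b), (dist_sym a' a) in *.
    apply Rabs_le; lra.
  - destruct (terms_lipschitz_uniform ts (fun k => term_lipschitz_exists (ts k)) (Rari L r))
      as (N & C & HC & H).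
    exists N, (Rabs (Rlip L r) * (INR (Rari L r) * C)); split.
    + pose proof (Rabs_pos (Rlip L r)); pose proof (pos_INR (Rari L r)).
      apply Rmult_le_pos; [|apply Rmult_le_pos]; auto.
    + intros x y; unfold evalM; simpl; eapply Rle_trans; [apply HM | now apply symbol_lipschitz].
  - exists (Nat.max N1 N2), (C1 + C2); exact (lipschitz_plus _ _ _ _ _ _ H1 H2).
  - exists N, (Rabs c * C); exact (lipschitz_scale _ _ _ c H).
  - exists N, C; exact (lipschitz_sup _ _ _ x H).
  - exists N, (Rabs (-1) * (Rabs (-1) * C)); intros.
    destruct (lipschitz_scale _ _ _ (-1) (lipschitz_sup _ _ _ x (lipschitz_scale _ _ _ (-1) H)))
      as [H0 H'].
    split; auto; intros y y'; unfold evalM; rewrite !eval_finf.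
    set (u := eval _ _ y _); set (v := eval _ _ y' _).
    replace (- u - - v) with (-1 * u - -1 * v) by ring; apply H'.
Qed.

Lemma evalM_le_sup x p y m : evalM M (upd y x m) p <= evalM M y (fsup x p).
Proof.
  destruct (formula_lipschitz p) as (N & C & H).
  exact (supF_ub x (fun z => evalM M z p) _ y m (lipschitz_bound N C _ H)).
Qed.
End Lipschitz.

Section DenseSubset.
Variables (L : Lang) (M : Str L).
Hypothesis HM : is_structure L M.

Lemma ball_open c r : is_open M (fun y => dist M c y < r).
Proof.
  intros x Hx; exists (r - dist M c x); split; [lra|].
  intros y Hy; pose proof (dist_triangle L M HM c x y); lra.
Qed.

Definition separated (del : R) (S : car M -> Prop) :=
  forall x y, S x -> S y -> x <> y -> del <= dist M x y.

Definition del_dense (del : R) (S : car M -> Prop) :=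
  forall z, exists y, S y /\ dist M y z < del.

Lemma separated_mono del del' S : del' <= del -> separated del S -> separated del' S.
Proof. intros Hd HS x y Hx Hy Hxy; specialize (HS x y Hx Hy Hxy); lra. Qed.

(* A maximal [del]-separated superset is [del]-dense. *)
Lemma separated_extend del S : del > 0 -> separated del S ->
  exists T, (forall x, S x -> T x) /\ separated del T /\ del_dense del T.
Proof.
  intros Hdel HS.
  destruct (OrderBridge.zorn_chains (car M) (fun X => separated del (fun x => X x \/ S x)))
    as [X [HX Xmax]].
  { intros F HF Hchain x y Hx Hy Hne.
    destruct Hx as [[X1 [FX1 X1x]] | Sx], Hy as [[X2 [FX2 X2y]] | Sy].
    - destruct (Hchain X1 X2 FX1 FX2); [apply (HF X2) | apply (HF X1)]; auto.
    - apply (HF X1); auto.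
    - apply (HF X2); auto.
    - apply HS; auto. }
  exists (fun x => X x \/ S x); split; [auto | split; auto].
  intros z; apply NNPP; intros Hfar.
  assert (Hfar' : forall w, X w \/ S w -> w <> z -> del <= dist M w z)
    by (intros w Hw Hwz; apply Rnot_lt_le; intros Hlt; apply Hfar; eauto).
  assert (Hz : separated del (fun x => (X x \/ x = z) \/ S x)).
  { intros x y Hx Hy Hne.
    destruct (classic (x = z)) as [->|Hxz]; destruct (classic (y = z)) as [->|Hyz];
      [tauto | rewrite dist_sym by auto; apply Hfar'; tauto | apply Hfar'; tauto |].
    apply HX; tauto. }
  apply Hfar; exists z; split.
  - left; apply (Xmax (fun x => X x \/ x = z)); auto.
  - rewrite dist_refl by auto; lra.
Qed.

Definition extend (del : R) (S : car M -> Prop) : car M -> Prop :=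
  epsilon (inhabits S)
    (fun T => (forall x, S x -> T x) /\ separated del T /\ del_dense del T).

Lemma extend_spec del S : del > 0 -> separated del S ->
  (forall x, S x -> extend del S x) /\ separated del (extend del S) /\
  del_dense del (extend del S).
Proof.
  intros; apply (epsilon_spec (inhabits S)
    (fun T => (forall x, S x -> T x) /\ separated del T /\ del_dense del T)).
  now apply separated_extend.
Qed.

Definition delta (n : nat) := / INR (S n).

Lemma delta_pos n : delta n > 0.
Proof. apply Rinv_0_lt_compat, lt_0_INR; lia. Qed.

Lemma delta_le n m : (n <= m)%nat -> delta m <= delta n.
Proof. intros; apply Rinv_le_contravar; [apply lt_0_INR; lia | apply le_INR; lia]. Qed.

(* Nested nets, so that every net point has a level from which on it stays in the net. *)
Fixpoint net (n : nat) : car M -> Prop :=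
  match n with
  | O => extend (delta 0) (fun _ => False)
  | S n => extend (delta (S n)) (net n)
  end.

Lemma net_spec n : separated (delta n) (net n) /\ del_dense (delta n) (net n).
Proof.
  induction n as [|n [IHsep _]]; simpl; apply extend_spec; try apply delta_pos.
  - intros x y [].
  - apply (separated_mono (delta n)); auto; apply delta_le; lia.
Qed.

Lemma net_mono n m x : (n <= m)%nat -> net n x -> net m x.
Proof.
  induction 1; auto; intros Hx; simpl; apply extend_spec; auto; [apply delta_pos|].
  apply (separated_mono (delta m)); [apply delta_le; lia | apply net_spec].
Qed.

Definition net_point := {x : car M | exists n, net n x}.

Lemma net_point_dense x eps : eps > 0 -> exists k : net_point, dist M x (proj1_sig k) < eps.
Proof.
  intros He; destruct (inv_INR_S_lt eps He) as [N HN].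
  destruct (proj2 (net_spec N) x) as [y [Hy Hd]].
  exists (exist _ y (ex_intro _ N Hy)); simpl; rewrite dist_sym by auto.
  unfold delta in Hd; lra.
Qed.

Lemma net_point_nbhd Bs : is_base M Bs -> forall k : net_point,
  exists nV : nat * (car M -> Prop), net (fst nV) (proj1_sig k) /\ Bs (snd nV) /\
    snd nV (proj1_sig k) /\ forall y, snd nV y -> dist M (proj1_sig k) y < delta (fst nV) / 2.
Proof.
  intros [_ Hbase] [x [n Hn]]; simpl.
  destruct (Hbase (fun y => dist M x y < delta n / 2) x) as [V [HV1 [HV2 HV3]]].
  - apply ball_open.
  - rewrite dist_refl by auto; pose proof (delta_pos n); lra.
  - now exists (n, V).
Qed.

(* Distinct net points have disjoint basic neighbourhoods, which injects them into any base. *)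
Lemma net_point_card : card_le_weight M net_point.
Proof.
  intros Bs HBs.
  pose proof (fun k => constructive_indefinite_description _ (net_point_nbhd Bs HBs k)) as ch.
  exists (fun k => inl (exist _ (snd (proj1_sig (ch k))) (proj1 (proj2 (proj2_sig (ch k)))))).
  intros k1 k2 Heq; injection Heq as Heq.
  destruct (proj2_sig (ch k1)) as (Hn1 & _ & V1 & B1), (proj2_sig (ch k2)) as (Hn2 & _ & V2 & B2).
  rewrite Heq in V1, B1.
  apply eq_sig_hprop; [intros; apply proof_irrelevance|].
  apply NNPP; intros Hne.
  pose proof (B1 _ V2) as D1; pose proof (B2 _ V1) as D2.
  rewrite (dist_sym L M HM) in D2.
  destruct (Nat.le_ge_cases (fst (proj1_sig (ch k1))) (fst (proj1_sig (ch k2)))) as [Hle | Hle].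
  - pose proof (proj1 (net_spec _) _ _ (net_mono _ _ _ Hle Hn1) Hn2 Hne).
    pose proof (delta_pos (fst (proj1_sig (ch k2)))); lra.
  - pose proof (proj1 (net_spec _) _ _ Hn1 (net_mono _ _ _ Hle Hn2) Hne).
    pose proof (delta_pos (fst (proj1_sig (ch k1)))); lra.
Qed.
End DenseSubset.

Lemma eval_term_Mmu {L} I A mu (M : Str L) t (a : nat -> I -> car M) i :
  eval_term (Mmu I A mu M) a t i = eval_term M (fun k => a k i) t.
Proof. induction t; simpl; auto; f_equal; now apply functional_extensionality. Qed.

Section Measurability.
Variables (I : Type) (A : (I -> Prop) -> Prop) (mu : (I -> Prop) -> R).
Hypothesis HA : is_charge_space I A mu.
Variables (L : Lang) (M : Str L).
Hypothesis HM : is_structure L M.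

Definition union_closed (J : Type) :=
  forall F : J -> I -> Prop, (forall j, A (F j)) -> A (fun i => exists j, F j i).

Lemma union_closed_inj J J' (iota : J' -> J) :
  (forall j1 j2, iota j1 = iota j2 -> j1 = j2) -> union_closed J -> union_closed J'.
Proof.
  intros Hinj HJ F HF.
  apply (A_ext I A (fun i => exists j, exists j', iota j' = j /\ F j' i)).
  { intros i; split; [intros [j [j' [_ H]]] | intros [j' H]]; eauto. }
  apply HJ; intros j; destruct (classic (exists j', iota j' = j)) as [[j0 <-] | Hn].
  - apply (A_ext I A (F j0)); auto; intros i; split; [eauto|].
    intros [j' [Hj' H]]; now rewrite <- (Hinj _ _ Hj').
  - apply (A_ext I A (fun _ => False)); [| apply (A_false I A mu HA)].
    intros i; split; [tauto | intros [j' [Hj' _]]; eauto].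
Qed.

(* A Caratheodory-type property; it holds when [M] is finite and when [A] is
   closed under intersections of [w(M)] members. *)
Definition subst_measurable := forall (G : car M -> I -> R) C, 0 <= C ->
  (forall d r, A (fun i => r < G d i)) ->
  (forall d d' i, Rabs (G d i - G d' i) <= C * dist M d d') ->
  forall b, measurable_map I A M b -> forall r, A (fun i => r < G (b i) i).

Lemma measurable_const (m : car M) : measurable_map I A M (fun _ => m).
Proof. intros B _; apply (A_const I A mu HA). Qed.

Lemma measurable_upd a x b : (forall k, measurable_map I A M (a k)) ->
  measurable_map I A M b -> forall k, measurable_map I A M (upd a x b k).
Proof. intros Ha Hb k; unfold upd; destruct (Nat.eqb k x); auto. Qed.

Section DenseFamily.
Variable m0 : car M.
Variables (K : Type) (emb : K -> car M).
Hypothesis emb_dense : forall x eps, eps > 0 -> exists k, dist M x (emb k) < eps.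
Hypothesis K_union_closed : union_closed K.
Hypothesis Hsubst : subst_measurable.

Lemma lipschitz_comp_gt N : forall C F, lipschitz L M N C F ->
  forall e, (forall k, measurable_map I A M (e k)) ->
  forall r, A (fun i => r < F (fun k => e k i)).
Proof.
  induction N as [|N IH]; intros C F [HC HF] e He r.
  - apply (A_ext I A (fun _ => r < F (fun _ => m0))); [| apply (A_const I A mu HA)].
    intros i; specialize (HF (fun k => e k i) (fun _ => m0)); unfold dsum in HF; simpl in HF.
    rewrite Rmult_0_r in HF; apply Rabs_le_inv in HF; split; intros; lra.
  - set (G := fun d i => F (upd (fun k => e k i) N d)).
    assert (HGmeas : forall d r, A (fun i => r < G d i)).
    { intros d r'; apply (IH C (fun y => F (upd y N d))); auto; split; auto; intros x y.
      replace (dsum L M N x y) with (dsum L M (S N) (upd x N d) (upd y N d)); [apply HF|].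
      unfold dsum; simpl; unfold upd at 3 4; rewrite Nat.eqb_refl, dist_refl, Rplus_0_r by auto.
      apply rsum_ext; intros k Hk; unfold upd; destruct (Nat.eqb_spec k N); [lia | auto]. }
    assert (HGlip : forall d d' i, Rabs (G d i - G d' i) <= C * dist M d d').
    { intros d d' i; specialize (HF (upd (fun k => e k i) N d) (upd (fun k => e k i) N d')).
      pose proof (dsum_upd_point L M HM (S N) (fun k => e k i) N d d'); unfold G; nra. }
    apply (A_ext I A (fun i => r < G (e N i) i)); [| now apply (Hsubst G C)].
    intros i; unfold G; rewrite (upd_same (fun k => e k i) N); tauto.
Qed.

Lemma lipschitz_comp_Ameas N C F e : lipschitz L M N C F ->
  (forall k, measurable_map I A M (e k)) -> Ameas I A (fun i => F (fun k => e k i)).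
Proof.
  intros HF He r; split; [now apply (lipschitz_comp_gt N C)|].
  apply (A_ext I A (fun i => - r < -1 * F (fun k => e k i))); [intros; lra|].
  apply (lipschitz_comp_gt N (Rabs (-1) * C) (fun x => -1 * F x)); auto.
  now apply lipschitz_scale.
Qed.

Lemma lipschitz_comp_bounded N C F (e : nat -> I -> car M) : lipschitz L M N C F ->
  bounded I (fun i => F (fun k => e k i)).
Proof.
  intros HF; exists (Rabs (F (fun _ => m0)) + C * INR N); intros i.
  exact (lipschitz_bound L M HM m0 N C F HF (fun k => e k i)).
Qed.

(* Disjointify the cover along a well-ordering of [K]: [i] goes to the least [k]
   with [U k i]. *)
Lemma measurable_selection (U : K -> I -> Prop) :
  (forall k, A (U k)) -> (forall i, exists k, U k i) ->
  exists b, measurable_map I A M b /\ forall i, exists k, b i = emb k /\ U k i.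
Proof.
  intros HU Hcov; destruct (OrderBridge.well_ordering K) as [R HR].
  set (W := fun k i => U k i /\ forall k', U k' i -> R k k').
  assert (HW : forall k, A (W k)).
  { intros k; apply (A_ext I A (fun i => U k i /\ ~ exists j : {k' | ~ R k k'}, U (proj1_sig j) i)).
    { intros i; unfold W; split; intros [Hk Hmin]; split; auto.
      - intros k' Hk'; apply NNPP; intros HR'; apply Hmin; now exists (exist _ k' HR').
      - intros [[k' HR'] Hk']; apply HR', Hmin, Hk'. }
    apply (A_and I A mu HA), (A_compl I A mu HA); auto.
    apply (union_closed_inj K _ (@proj1_sig _ _)); auto.
    intros j1 j2; apply eq_sig_hprop; intros; apply proof_irrelevance. }
  assert (Hex : forall i, exists k, W k i)
    by (intros i; destruct (HR _ (Hcov i)) as [k [Hk _]]; now exists k).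
  assert (Huniq : forall i k k', W k i -> W k' i -> k = k').
  { intros i k k' Hk Hk'; destruct (HR _ (Hcov i)) as [z [_ Hz]].
    now rewrite <- (Hz k Hk), <- (Hz k' Hk'). }
  pose proof (fun i => constructive_indefinite_description _ (Hex i)) as ch.
  exists (fun i => emb (proj1_sig (ch i))); split.
  - intros B _; apply (A_ext I A (fun i => exists k, W k i /\ B (emb k))).
    + intros i; split.
      * intros [k [Wk Bk]]; now rewrite (Huniq i (proj1_sig (ch i)) k (proj2_sig (ch i)) Wk).
      * intros Hb; exists (proj1_sig (ch i)); split; auto; apply proj2_sig.
    + apply K_union_closed; intros k; apply (A_and I A mu HA); auto; apply (A_const I A mu HA).
  - intros i; exists (proj1_sig (ch i)); split; auto; apply (proj2_sig (ch i)).
Qed.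

Definition integral_formula (p : formula L) := forall a,
  (forall k, measurable_map I A M (a k)) ->
  evalMmu I A mu M a p = integral I A mu (fun i => evalM M (fun k => a k i) p).

Lemma formula_comp_Ameas p a : (forall k, measurable_map I A M (a k)) ->
  Ameas I A (fun i => evalM M (fun k => a k i) p).
Proof.
  intros Ha; destruct (formula_lipschitz L M HM m0 p) as (N & C & H).
  now apply (lipschitz_comp_Ameas N C (fun x => evalM M x p)).
Qed.

Lemma formula_comp_bounded p (a : nat -> I -> car M) :
  bounded I (fun i => evalM M (fun k => a k i) p).
Proof.
  destruct (formula_lipschitz L M HM m0 p) as (N & C & H).
  now apply (lipschitz_comp_bounded N C (fun x => evalM M x p)).
Qed.

Lemma integral_formula_one : integral_formula fone.
Proof. intros a Ha; exact (eq_sym (integral_const I A mu HA 1)). Qed.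

Lemma integral_formula_dist t1 t2 : integral_formula (fdist t1 t2).
Proof.
  intros a Ha; unfold evalMmu, evalM; simpl; f_equal.
  apply functional_extensionality; intros i; now rewrite !eval_term_Mmu.
Qed.

Lemma integral_formula_rel r ts : integral_formula (frel r ts).
Proof.
  intros a Ha; unfold evalMmu, evalM; simpl; f_equal.
  apply functional_extensionality; intros i; f_equal.
  apply functional_extensionality; intros k; now rewrite eval_term_Mmu.
Qed.

Lemma integral_formula_plus p q : integral_formula p -> integral_formula q ->
  integral_formula (fplus p q).
Proof.
  intros Hp Hq a Ha.
  change (evalMmu I A mu M a (fplus p q)) with (evalMmu I A mu M a p + evalMmu I A mu M a q).
  rewrite Hp, Hq by auto; symmetry.
  apply (integral_plus I A mu HA (fun i => evalM M (fun k => a k i) p)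
    (fun i => evalM M (fun k => a k i) q));
    [| | | | exact (formula_comp_Ameas (fplus p q) a Ha)
     | exact (formula_comp_bounded (fplus p q) a)];
    auto using formula_comp_Ameas, formula_comp_bounded.
Qed.

Lemma integral_formula_scale c p : integral_formula p -> integral_formula (fscale c p).
Proof.
  intros Hp a Ha.
  change (evalMmu I A mu M a (fscale c p)) with (c * evalMmu I A mu M a p).
  rewrite Hp by auto; symmetry.
  apply (integral_scale I A mu HA c (fun i => evalM M (fun k => a k i) p));
    [| | exact (formula_comp_Ameas (fscale c p) a Ha)
     | exact (formula_comp_bounded (fscale c p) a)];
    auto using formula_comp_Ameas, formula_comp_bounded.
Qed.

Lemma sup_gap_measurable x p a eps d : (forall k, measurable_map I A M (a k)) ->
  A (fun i => evalM M (fun k => a k i) (fsup x p) - eps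
              < evalM M (upd (fun k => a k i) x d) p).
Proof.
  intros Ha; destruct (formula_lipschitz L M HM m0 p) as (N & C & HF).
  set (H := fun y => evalM M (upd y x d) p + -1 * evalM M y (fsup x p)).
  apply (A_ext I A (fun i => - eps < H (fun k => a k i))); [intros; unfold H; lra|].
  apply (lipschitz_comp_gt (Nat.max N N) (C + Rabs (-1) * C)); auto.
  apply (lipschitz_plus L M HM); [exact (lipschitz_upd L M HM N C _ x d HF)|].
  apply lipschitz_scale; exact (lipschitz_sup L M HM m0 N C _ x HF).
Qed.

Lemma sup_gap_dense x p eps y : eps > 0 ->
  exists k, evalM M y (fsup x p) - eps < evalM M (upd y x (emb k)) p.
Proof.
  intros He; destruct (formula_lipschitz L M HM m0 p) as (N & C & [HC HF]).
  assert (Hm : exists m, evalM M y (fsup x p) - eps / 2 < evalM M (upd y x m) p).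
  { apply NNPP; intros Hn.
    assert (evalM M y (fsup x p) <= evalM M y (fsup x p) - eps / 2); [|lra].
    apply (supF_lub L M m0 x (fun z => evalM M z p) y); intros m.
    apply Rnot_lt_le; intros Hc; apply Hn; eauto. }
  destruct Hm as [m Hm].
  destruct (emb_dense m (eps / (2 * (C + 1)))) as [k Hk]; [apply Rdiv_lt_0_compat; lra|].
  exists k; specialize (HF (upd y x m) (upd y x (emb k))); apply Rabs_le_inv in HF.
  pose proof (dsum_upd_point L M HM N y x m (emb k)).
  assert (C * dist M m (emb k) <= eps / 2).
  { apply Rle_trans with (C * (eps / (2 * (C + 1)))); [apply Rmult_le_compat_l; lra|].
    apply (Rmult_le_reg_r (2 * (C + 1))); [lra|]; field_simplify; nra. }
  nra.
Qed.

Lemma integral_formula_sup x p : integral_formula p -> integral_formula (fsup x p).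
Proof.
  intros Hp a Ha.
  change (evalMmu I A mu M a (fsup x p)) with
    (Rsup (fun v => exists b, measurable_map I A M b /\ v = evalMmu I A mu M (upd a x b) p)).
  set (T := integral I A mu (fun i => evalM M (fun k => a k i) (fsup x p))).
  assert (Hshift : forall b c, measurable_map I A M b ->
            (forall i, evalM M (fun k => a k i) (fsup x p) + c
                       <= evalM M (upd (fun k => a k i) x (b i)) p) ->
            T + c <= evalMmu I A mu M (upd a x b) p).
  { intros b c Hb Hc; pose proof (measurable_upd a x b Ha Hb) as Hab; rewrite Hp by auto.
    apply (integral_le_shift I A mu HA); auto using formula_comp_Ameas, formula_comp_bounded.
    intros i; rewrite upd_pointwise; apply Hc. }
  assert (Hub : forall b, measurable_map I A M b -> evalMmu I A mu M (upd a x b) p <= T).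
  { intros b Hb; pose proof (measurable_upd a x b Ha Hb) as Hab; rewrite Hp by auto.
    rewrite <- (Rplus_0_r (integral I A mu (fun i => evalM M (fun k => upd a x b k i) p))).
    apply (integral_le_shift I A mu HA); auto using formula_comp_Ameas, formula_comp_bounded.
    intros i; rewrite Rplus_0_r, upd_pointwise; apply (evalM_le_sup L M HM m0). }
  apply Rle_antisym.
  - apply Rsup_lub; [|intros v [b [Hb ->]]; auto].
    exists (evalMmu I A mu M (upd a x (fun _ => m0)) p), (fun _ => m0).
    split; auto; apply measurable_const.
  - apply Rle_forall_eps; intros eps He.
    destruct (measurable_selection _ (fun k => sup_gap_measurable x p a eps (emb k) Ha)
      (fun i => sup_gap_dense x p eps (fun k => a k i) He)) as [b [Hb Hbk]].
    apply Rle_trans with (evalMmu I A mu M (upd a x b) p + eps).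
    + assert (T + - eps <= evalMmu I A mu M (upd a x b) p); [|lra].
      apply Hshift; auto; intros i; destruct (Hbk i) as [k [-> Hk]]; lra.
    + apply Rplus_le_compat_r, (Rsup_ub _ T); [intros v [b' [Hb' ->]]; auto | eauto].
Qed.

Lemma integral_formula_inf x p : integral_formula p -> integral_formula (finf x p).
Proof.
  intros Hp a Ha.
  pose proof (integral_formula_scale (-1) _
    (integral_formula_sup x _ (integral_formula_scale (-1) p Hp)) a Ha) as H.
  unfold evalMmu in *; rewrite eval_finf.
  replace (fun i => evalM M (fun k => a k i) (finf x p)) with
    (fun i => evalM M (fun k => a k i) (fscale (-1) (fsup x (fscale (-1) p)))).
  - rewrite <- H; simpl; ring.
  - apply functional_extensionality; intros i; unfold evalM; rewrite eval_finf; simpl; ring.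
Qed.

Lemma integral_formula_all p : integral_formula p.
Proof.
  induction p.
  - apply integral_formula_one.
  - apply integral_formula_dist.
  - apply integral_formula_rel.
  - now apply integral_formula_plus.
  - now apply integral_formula_scale.
  - now apply integral_formula_sup.
  - now apply integral_formula_inf.
Qed.
End DenseFamily.

Lemma finite_union_closed J : finite_type J -> union_closed J.
Proof.
  intros [l Hl] F HF.
  apply (A_ext I A (fun i => exists j, List.In j l /\ F j i)).
  { intros i; split; [intros [j [_ H]] | intros [j H]]; eauto. }
  clear Hl; induction l as [|j l IH].
  - apply (A_ext I A (fun _ => False)); [| apply (A_false I A mu HA)].
    intros i; split; [tauto | intros [j [[] _]]].
  - apply (A_ext I A (fun i => F j i \/ exists j', List.In j' l /\ F j' i));
      [| apply (A_or I A mu HA); auto].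
    intros i; split.
    + intros [H | [j' [Hin H]]]; [exists j | exists j']; simpl; auto.
    + intros [j' [[<- | Hin] H]]; eauto.
Qed.

Lemma measurable_eq_point b d : measurable_map I A M b -> A (fun i => b i = d).
Proof.
  intros Hb; apply (A_ext I A (fun i => ~ b i <> d)); [intros; split; [apply NNPP | tauto]|].
  apply (Hb (fun y => ~ y <> d)); intros S Hopen Hcompl _; apply Hcompl, Hopen.
  intros y Hy; exists (dist M y d); split.
  - destruct (dist_nonneg L M HM y d) as [|H]; auto.
    exfalso; apply Hy, (dist_eq0 L M HM); auto.
  - intros z Hz ->; lra.
Qed.

Lemma finite_subst_measurable : finite_type (car M) -> subst_measurable.
Proof.
  intros Hfin G C _ HG _ b Hb r.
  apply (A_ext I A (fun i => exists d, b i = d /\ r < G d i)).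
  { intros i; split; [intros [d [-> H]]; auto | eauto]. }
  apply finite_union_closed; auto; intros d.
  apply (A_and I A mu HA); [now apply measurable_eq_point | apply HG].
Qed.

Section LargeWeight.
Hypothesis Hmean : forall (J : Type) (F : J -> I -> Prop),
  card_le_weight M J -> (forall j, A (F j)) -> A (fun i => forall j, F j i).

Lemma weight_union_closed J : card_le_weight M J -> union_closed J.
Proof.
  intros HJ F HF; apply (A_ext I A (fun i => ~ forall j, ~ F j i)).
  { intros i; split; [intros H; apply NNPP; intros Hn; apply H; intros j Hj; eauto|].
    intros [j Hj] H; exact (H j Hj). }
  apply (A_compl I A mu HA), Hmean; auto; intros j; apply (A_compl I A mu HA), HF.
Qed.

Lemma nat_card_le_weight : card_le_weight M nat.
Proof. intros Bs _; exists inr; congruence. Qed.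

(* [G (b i) i > r] is witnessed by a net point [delta m]-close to [b i] at which
   [G] exceeds [r] by the Lipschitz slack [C * delta m]. *)
Lemma weight_subst_measurable : subst_measurable.
Proof.
  intros G C HC HG HGlip b Hb r.
  apply (A_ext I A (fun i => exists m, exists k : net_point L M,
     dist M (proj1_sig k) (b i) < delta m /\ r + C * delta m < G (proj1_sig k) i)).
  - intros i; split.
    + intros [m [k [Hk Hr]]]; specialize (HGlip (b i) (proj1_sig k) i).
      apply Rabs_le_inv in HGlip; rewrite (dist_sym L M HM) in Hk.
      assert (C * dist M (b i) (proj1_sig k) <= C * delta m) by (apply Rmult_le_compat_l; lra).
      lra.
    + intros Hr; set (s := G (b i) i - r).
      destruct (inv_INR_S_lt (s / (2 * C + 1))) as [m Hm];
        [apply Rdiv_lt_0_compat; unfold s; lra|]; fold (delta m) in Hm.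
      destruct (net_point_dense L M HM (b i) (delta m) (delta_pos m)) as [k Hk].
      exists m, k; rewrite (dist_sym L M HM); split; auto.
      specialize (HGlip (b i) (proj1_sig k) i); apply Rabs_le_inv in HGlip.
      assert (C * dist M (b i) (proj1_sig k) <= C * delta m) by (apply Rmult_le_compat_l; lra).
      assert (delta m * (2 * C + 1) < s).
      { apply (Rmult_lt_reg_r (/ (2 * C + 1))); [apply Rinv_0_lt_compat; lra|].
        rewrite Rmult_assoc, Rinv_r by lra; unfold Rdiv in Hm; lra. }
      pose proof (delta_pos m); unfold s in *; nra.
  - apply weight_union_closed; [apply nat_card_le_weight|]; intros m.
    apply weight_union_closed; [exact (net_point_card L M HM)|]; intros k.
    apply (A_and I A mu HA); [|apply HG].
    apply (Hb (fun y => dist M (proj1_sig k) y < delta m)).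
    intros S Hopen _ _; apply Hopen, (ball_open L M HM).
Qed.
End LargeWeight.
End Measurability.

Theorem mainTheorem10 (L : Lang) (I : Type) (A : (I -> Prop) -> Prop)
  (mu : (I -> Prop) -> R) (M : Str L) :
  is_charge_space I A mu -> is_structure L M -> meanable I A M ->
  forall (phi : formula L) (a : nat -> I -> car M),
    (forall k, measurable_map I A M (a k)) ->
    evalMmu I A mu M a phi = integral I A mu (fun i => evalM M (fun k => a k i) phi).
Proof.
  intros HA HM Hmean phi a Ha.
  destruct (charge_space_inhabited I A mu HA) as [i0 _].
  destruct Hmean as [Hfin | Hcl].
  - apply (integral_formula_all I A mu HA L M HM (a 0%nat i0) (car M) (fun x => x)); auto.
    + intros x eps He; exists x; rewrite (dist_refl L M HM); lra.
    + exact (finite_union_closed I A mu HA _ Hfin).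
    + exact (finite_subst_measurable I A mu HA L M HM Hfin).
  - apply (integral_formula_all I A mu HA L M HM (a 0%nat i0) (net_point L M) (@proj1_sig _ _));
      auto.
    + apply net_point_dense, HM.
    + exact (weight_union_closed I A mu HA L M Hcl _ (net_point_card L M HM)).
    + exact (weight_subst_measurable I A mu HA L M HM Hcl).
Qed.
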